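(* Let $\sigma(x,y)=(x\rightharpoonup y,x\leftharpoonup y)$ be an involutive non-degenerate quiver-theoretic Yang--Baxter map on a quiver $\mathscr{A}$ over $\Lambda$. Define $x\star y:=(x\rightharpoonup\cdot)^{-1}(y)$ for $\mathfrak{s}(x)=\mathfrak{s}(y)$, $x\bullet y:=(\cdot\leftharpoonup x)^{-1}(y)$ for $\mathfrak{t}(x)=\mathfrak{t}(y)$, and $x\,\tilde\star\,y:=y\bullet x$. Then $(\mathscr{A},\star,\tilde\star)$ is a weak RLC-system.
   Context: A quiver-theoretic Yang--Baxter map is a source/target-preserving map $\sigma$ on composable pairs $\mathscr{A}\otimes\mathscr{A}$ satisfying the braid relation; involutive: $\sigma^2=\mathrm{id}$; non-degenerate: all maps $x\rightharpoonup\cdot\colon\mathscr{A}(\mathfrak{t}(x),\Lambda)\to\mathscr{A}(\mathfrak{s}(x),\Lambda)$ and $\cdot\leftharpoonup y\colon\mathscr{A}(\Lambda,\mathfrak{s}(y))\to\mathscr{A}(\Lambda,\mathfrak{t}(y))$ are bijective. A weak RC-system $(Q,\star)$: partial operation with $x\star y$ defined only if $\mathfrak{s}(x)=\mathfrak{s}(y)$; if $x\star y$ is defined so is $y\star x$, with $\mathfrak{s}(x\star y)=\mathfrak{t}(x)$, $\mathfrak{s}(y\star x)=\mathfrak{t}(y)$, $\mathfrak{t}(x\star y)=\mathfrak{t}(y\star x)$; and if $x\star y$, $x\star z$, $(x\star y)\star(x\star z)$ are defined then $y\star z$, $(y\star x)\star(y\star z)$ are defined and $(x\star y)\star(x\star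 z)=(y\star x)\star(y\star z)$. A weak co-RC-system $(Q,\bullet)$: $x\bullet y$ defined only if $\mathfrak{t}(x)=\mathfrak{t}(y)$; if defined, $y\bullet x$ is defined with $\mathfrak{t}(x\bullet y)=\mathfrak{s}(x)$, $\mathfrak{t}(y\bullet x)=\mathfrak{s}(y)$, $\mathfrak{s}(x\bullet y)=\mathfrak{s}(y\bullet x)$; and the same law $(x\bullet y)\bullet(x\bullet z)=(y\bullet x)\bullet(y\bullet z)$ with the same definedness clause. A weak LC-system $(Q,\tilde\star)$ is one such that $x\bullet y:=y\,\tilde\star\,x$ makes $(Q,\bullet)$ a weak co-RC-system. A weak RLC-system $(Q,\star,\tilde\star)$ is such that $(Q,\star)$ is a weak RC-system, $(Q,\tilde\star)$ a weak LC-system, and: if $x\star y$ is defined then $(y\star x)\,\tilde\star\,(x\star y)$ is defined and equals $x$; if $x\,\tilde\star\,y$ is defined then $(y\,\tilde\star\,x)\star(x\,\tilde\star\,y)$ is defined and equals $x$. *)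

From Stdlib Require Import ClassicalEpsilon.

Set Implicit Arguments.

Section Quiver.
Variables (Lambda A : Type) (s t : A -> Lambda).

(* Composable pairs x (x) y : t x = s y.  sigma(x,y) = (lh x y, rh x y),
   where lh x y = x -> y  (left harpoon) and rh x y = x <- y. The maps
   lh, rh are total functions, only their values on composable pairs matter. *)
Variables (lh rh : A -> A -> A).

Definition sigma (p : A * A) : A * A := (lh (fst p) (snd p), rh (fst p) (snd p)).

Definition composable (x y : A) : Prop := t x = s y.

Definition st_preserving : Prop :=
  forall x y, composable x y ->
    s (lh x y) = s x /\ composable (lh x y) (rh x y) /\ t (rh x y) = t y.

Definition sigma12 (p : A * A * A) : A * A * A :=
  let '(x, y, z) := p in (lh x y, rh x y, z).
Definition sigma23 (p : A * A * A) : A * A * A :=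
  let '(x, y, z) := p in (x, lh y z, rh y z).

Definition braid : Prop :=
  forall x y z, composable x y -> composable y z ->
    sigma12 (sigma23 (sigma12 (x, y, z))) = sigma23 (sigma12 (sigma23 (x, y, z))).

Definition involutive : Prop :=
  forall x y, composable x y -> sigma (sigma (x, y)) = (x, y).

Definition nondegenerate : Prop :=
  (forall x,
     (forall y1 y2, s y1 = t x -> s y2 = t x -> lh x y1 = lh x y2 -> y1 = y2) /\
     (forall z, s z = s x -> exists y, s y = t x /\ lh x y = z)) /\
  (forall y,
     (forall x1 x2, t x1 = s y -> t x2 = s y -> rh x1 y = rh x2 y -> x1 = x2) /\
     (forall z, t z = t y -> exists x, t x = s y /\ rh x y = z)).

Definition YB_map : Prop := st_preserving /\ braid.

Definition star (x y : A) : option A :=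
  match excluded_middle_informative (s x = s y) with
  | left _ => Some (epsilon (inhabits x) (fun z => s z = t x /\ lh x z = y))
  | right _ => None
  end.

Definition bullet (x y : A) : option A :=
  match excluded_middle_informative (t x = t y) with
  | left _ => Some (epsilon (inhabits x) (fun z => t z = s x /\ rh z x = y))
  | right _ => None
  end.

Definition startilde (x y : A) : option A := bullet y x.

End Quiver.

Section Systems.
Variables (Lambda A : Type) (s t : A -> Lambda).

(* partial operations are functions A -> A -> option A; None = undefined *)
Definition weak_RC (op : A -> A -> option A) : Prop :=
  (forall x y, op x y <> None -> s x = s y) /\
  (forall x y a, op x y = Some a ->
     exists b, op y x = Some b /\ s a = t x /\ s b = t y /\ t a = t b) /\
  (forall x y z a b c, op x y = Some a -> op x z = Some b -> op a b = Some c ->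
     exists d e, op y z = Some d /\ op y x = Some e /\ op e d = Some c).

Definition weak_coRC (op : A -> A -> option A) : Prop :=
  (forall x y, op x y <> None -> t x = t y) /\
  (forall x y a, op x y = Some a ->
     exists b, op y x = Some b /\ t a = s x /\ t b = s y /\ s a = s b) /\
  (forall x y z a b c, op x y = Some a -> op x z = Some b -> op a b = Some c ->
     exists d e, op y z = Some d /\ op y x = Some e /\ op e d = Some c).

Definition weak_LC (opt : A -> A -> option A) : Prop :=
  weak_coRC (fun x y => opt y x).

Definition weak_RLC (op opt : A -> A -> option A) : Prop :=
  weak_RC op /\ weak_LC opt /\
  (forall x y a, op x y = Some a ->
     exists b, op y x = Some b /\ opt b a = Some x) /\
  (forall x y a, opt x y = Some a ->
     exists b, opt y x = Some b /\ op b a = Some x).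

End Systems.

From Pilot Require Import Defs.
From Stdlib Require Import ClassicalEpsilon.

(* Non-degeneracy makes [star x y = Some z] and [bullet x y = Some z] mean
   exactly [y = lh x z] and [y = rh z x] for composable pairs, so every axiom
   becomes an identity between the components of sigma: the RC and co-RC laws
   are the first and third components of the braid relation, and the RLC
   compatibilities and the "swapped" operations come from involutivity. *)

Set Implicit Arguments.

Section YangBaxterRLC.

Variables (Lambda A : Type) (s t : A -> Lambda) (lh rh : A -> A -> A).
Hypothesis Hst : st_preserving s t lh rh.
Hypothesis Hbraid : braid s t lh rh.
Hypothesis Hinv : involutive s t lh rh.
Hypothesis Hnd : nondegenerate s t lh rh.

Local Notation composable := (composable s t).
Local Notation star := (star s t lh).
Local Notation bullet := (bullet s t rh).

Lemma source_lh x y : composable x y -> s (lh x y) = s x.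
Proof. intro H; apply (Hst H). Qed.

Lemma composable_sigma x y : composable x y -> composable (lh x y) (rh x y).
Proof. intro H; apply (Hst H). Qed.

Lemma target_rh x y : composable x y -> t (rh x y) = t y.
Proof. intro H; apply (Hst H). Qed.

Lemma composable_rh_l x a c :
  composable x a -> composable a c -> composable (rh x a) c.
Proof.
  unfold Defs.composable; intros Hxa Hac.
  rewrite (target_rh Hxa); exact Hac.
Qed.

Lemma composable_lh_r c a x :
  composable c a -> composable a x -> composable c (lh a x).
Proof.
  unfold Defs.composable; intros Hca Hax.
  rewrite (source_lh Hax); exact Hca.
Qed.

Lemma lh_sigma x y : composable x y -> lh (lh x y) (rh x y) = x.
Proof. intro H; injection (Hinv H); auto. Qed.

Lemma rh_sigma x y : composable x y -> rh (lh x y) (rh x y) = y.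
Proof. intro H; injection (Hinv H); auto. Qed.

Lemma braid_lh x a c : composable x a -> composable a c ->
  lh (lh x a) (lh (rh x a) c) = lh x (lh a c).
Proof. intros Hxa Hac; injection (Hbraid Hxa Hac); auto. Qed.

Lemma braid_rh c a x : composable c a -> composable a x ->
  rh (rh c (lh a x)) (rh a x) = rh (rh c a) x.
Proof.
  intros Hca Hax; injection (Hbraid Hca Hax); intros E _ _.
  symmetry; exact E.
Qed.

Lemma star_spec x y z :
  star x y = Some z <-> s x = s y /\ composable x z /\ lh x z = y.
Proof.
  unfold Defs.star.
  destruct (excluded_middle_informative (s x = s y)) as [Exy | NExy].
  - destruct (proj1 Hnd x) as [lh_inj lh_surj].
    assert (Hex : exists w, s w = t x /\ lh x w = y) by (apply lh_surj; auto).
    destruct (epsilon_spec (inhabits x) _ Hex) as [Hs Hlh].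
    split.
    + intro E; injection E as <-; unfold Defs.composable; auto.
    + intros [_ [Hxz Hz]]; f_equal; apply lh_inj; congruence.
  - split; [discriminate | intros [Exy _]; contradiction].
Qed.

Lemma bullet_spec x y z :
  bullet x y = Some z <-> t x = t y /\ composable z x /\ rh z x = y.
Proof.
  unfold Defs.bullet.
  destruct (excluded_middle_informative (t x = t y)) as [Exy | NExy].
  - destruct (proj2 Hnd x) as [rh_inj rh_surj].
    assert (Hex : exists w, t w = s x /\ rh w x = y) by (apply rh_surj; auto).
    destruct (epsilon_spec (inhabits x) _ Hex) as [Ht Hrh].
    split.
    + intro E; injection E as <-; unfold Defs.composable; auto.
    + intros [_ [Hzx Hz]]; f_equal; apply rh_inj; congruence.
  - split; [discriminate | intros [Exy _]; contradiction].
Qed.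

Lemma star_defined x y : star x y <> None -> s x = s y.
Proof.
  unfold Defs.star.
  destruct (excluded_middle_informative (s x = s y)); congruence.
Qed.

Lemma bullet_defined x y : bullet x y <> None -> t x = t y.
Proof.
  unfold Defs.bullet.
  destruct (excluded_middle_informative (t x = t y)); congruence.
Qed.

Lemma star_lh x z : composable x z -> star x (lh x z) = Some z.
Proof. intro H; apply star_spec; rewrite (source_lh H); auto. Qed.

Lemma bullet_rh z x : composable z x -> bullet x (rh z x) = Some z.
Proof. intro H; apply bullet_spec; rewrite (target_rh H); auto. Qed.

Lemma star_lh_swap x a : composable x a -> star (lh x a) x = Some (rh x a).
Proof.
  intro H; rewrite <- (lh_sigma H) at 2.
  exact (star_lh (composable_sigma H)).
Qed.

Lemma bullet_rh_swap a y : composable a y -> bullet (rh a y) y = Some (lh a y).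
Proof.
  intro H; rewrite <- (rh_sigma H) at 2.
  exact (bullet_rh (composable_sigma H)).
Qed.

Lemma weak_RC_star : weak_RC s t star.
Proof.
  split; [exact star_defined | split].
  - intros x y a Hxya; apply star_spec in Hxya as [_ [Hxa <-]].
    exists (rh x a); split; [exact (star_lh_swap Hxa) |].
    pose proof (composable_sigma Hxa); pose proof (target_rh Hxa).
    unfold Defs.composable in *; repeat split; congruence.
  - intros x y z a b c Hxya Hxzb Habc.
    apply star_spec in Hxya as [_ [Hxa <-]].
    apply star_spec in Hxzb as [_ [_ <-]].
    apply star_spec in Habc as [_ [Hac <-]].
    pose proof (composable_rh_l Hxa Hac) as Hrc.
    exists (lh (rh x a) c), (rh x a); split; [| split].
    + rewrite <- (braid_lh Hxa Hac).
      apply star_lh; unfold Defs.composable.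
      rewrite (source_lh Hrc); exact (composable_sigma Hxa).
    + exact (star_lh_swap Hxa).
    + exact (star_lh Hrc).
Qed.

Lemma weak_coRC_bullet : weak_coRC s t bullet.
Proof.
  split; [exact bullet_defined | split].
  - intros x y a Hxya; apply bullet_spec in Hxya as [_ [Hax <-]].
    exists (lh a x); split; [exact (bullet_rh_swap Hax) |].
    pose proof (composable_sigma Hax); pose proof (source_lh Hax).
    unfold Defs.composable in *; repeat split; congruence.
  - intros x y z a b c Hxya Hxzb Habc.
    apply bullet_spec in Hxya as [_ [Hax <-]].
    apply bullet_spec in Hxzb as [_ [_ <-]].
    apply bullet_spec in Habc as [_ [Hca <-]].
    pose proof (composable_lh_r Hca Hax) as Hcl.
    exists (rh c (lh a x)), (lh a x); split; [| split].
    + rewrite <- (braid_rh Hca Hax).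
      apply bullet_rh; unfold Defs.composable.
      rewrite (target_rh Hcl); exact (composable_sigma Hax).
    + exact (bullet_rh_swap Hax).
    + exact (bullet_rh Hcl).
Qed.

Lemma star_startilde_cancel x y a : star x y = Some a ->
  exists b, star y x = Some b /\ startilde s t rh b a = Some x.
Proof.
  intro Hxya; apply star_spec in Hxya as [_ [Hxa <-]].
  exists (rh x a); split; [exact (star_lh_swap Hxa) | exact (bullet_rh Hxa)].
Qed.

Lemma startilde_star_cancel x y a : startilde s t rh x y = Some a ->
  exists b, startilde s t rh y x = Some b /\ star b a = Some x.
Proof.
  intro Hyxa; apply bullet_spec in Hyxa as [_ [Hay <-]].
  exists (lh a y); split; [exact (bullet_rh_swap Hay) | exact (star_lh_swap Hay)].
Qed.

End YangBaxterRLC.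

Theorem proposition5p3 (Lambda A : Type) (s t : A -> Lambda) (lh rh : A -> A -> A) :
  YB_map s t lh rh -> involutive s t lh rh -> nondegenerate s t lh rh ->
  weak_RLC s t (star s t lh) (startilde s t rh).
Proof.
  intros [Hst Hbraid] Hinv Hnd.
  split; [| split; [| split]].
  - exact (weak_RC_star Hst Hbraid Hinv Hnd).
  - exact (weak_coRC_bullet Hst Hbraid Hinv Hnd).
  - exact (star_startilde_cancel Hst Hinv Hnd).
  - exact (startilde_star_cancel Hst Hinv Hnd).
Qed.
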